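(* Let $\varepsilon\in(0,\frac12)$ and $a\ge1$, and let $G$ be a graph. Assume that for every induced subgraph $F$ of $G$ with $|F|\ge\varepsilon^{2a}|G|$, there exists $k\in[2,1/\varepsilon]$ such that there is a complete or anticomplete $(k,|F|/k^a)$-blockade in $F$. Then $G$ has an $\varepsilon$-restricted induced subgraph with at least $\varepsilon^{3a}|G|$ vertices.
   Context: Graphs are finite and simple; $|G|$ is the number of vertices of $G$ and $\overline G$ its complement. $G$ is $\varepsilon$-sparse if its maximum degree is at most $\varepsilon|G|$, and $\varepsilon$-restricted if one of $G,\overline G$ is $\varepsilon$-sparse. A blockade in $G$ is a sequence $(B_1,\ldots,B_m)$ of disjoint subsets of $V(G)$, with length $m$ and width $\min_i|B_i|$; a $(k,w)$-blockade has length at least $k$ and width at least $w$. A blockade is complete (resp. anticomplete) if between any two distinct blocks all (resp. no) edges are present. *)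

From HB Require Import structures.
From mathcomp Require Import all_boot all_order all_algebra.
From mathcomp Require Import reals exp.
Set Implicit Arguments. Unset Strict Implicit. Unset Printing Implicit Defensive.
Import Order.TTheory GRing.Theory Num.Theory.
Local Open Scope ring_scope.

(* A simple graph on a finite vertex type T: a symmetric irreflexive relation e.
   Induced subgraphs are given by their vertex sets S : {set T}. *)

Definition compl_rel (T : finType) (e : rel T) : rel T :=
  fun x y => (x != y) && ~~ e x y.

Definition sparse_on (R : realType) (T : finType) (e : rel T) (eps : R)
    (S : {set T}) : Prop :=
  forall v, v \in S -> (#|[set u in S | e v u]|%:R <= eps * #|S|%:R)%R.

Definition restricted_on (R : realType) (T : finType) (e : rel T) (eps : R)
    (S : {set T}) : Prop :=
  sparse_on e eps S \/ sparse_on (compl_rel e) eps S.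

Definition blockade_in (T : finType) (S : {set T}) (B : seq {set T}) : Prop :=
  (forall i, (i < size B)%N -> nth set0 B i \subset S) /\
  (forall i j, (i < size B)%N -> (j < size B)%N -> i != j ->
     [disjoint nth set0 B i & nth set0 B j]).

Definition kw_blockade (R : realType) (T : finType) (S : {set T})
    (B : seq {set T}) (k : nat) (w : R) : Prop :=
  blockade_in S B /\ (k <= size B)%N /\
  (forall i, (i < size B)%N -> w <= #|nth set0 B i|%:R).

Definition complete_blockade (T : finType) (e : rel T) (B : seq {set T}) : Prop :=
  forall i j, (i < size B)%N -> (j < size B)%N -> i != j ->
    forall x y, x \in nth set0 B i -> y \in nth set0 B j -> e x y.

Definition anticomplete_blockade (T : finType) (e : rel T) (B : seq {set T}) : Prop :=
  forall i j, (i < size B)%N -> (j < size B)%N -> i != j ->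
    forall x y, x \in nth set0 B i -> y \in nth set0 B j -> ~~ e x y.

From HB Require Import structures.
From mathcomp Require Import all_boot all_order all_algebra.
From mathcomp Require Import reals exp.
From mathcomp Require Import zify lra.
Import Order.TTheory GRing.Theory Num.Theory.
Set Implicit Arguments. Unset Strict Implicit. Unset Printing Implicit Defensive.
Local Open Scope ring_scope.

(* Call a family of pairwise disjoint s-sets Q-linked when Q holds between any two
   vertices lying in different members.  Let th = eps^(2a)|G| and s = ceil(eps^(3a)|G|).
   By induction on |F|, every F with |F| >= s contains an anticomplete-linked family P
   and a complete-linked family P' with |F| <= th (|P||P'|)^a.  If |F| < th, a single
   s-subset serves as both.  Otherwise F has a complete or anticomplete
   (k, |F|/k^a)-blockade, whose blocks have at least eps^a th vertices since k <= 1/eps.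
   In a complete blockade, say, the complete families found in the blocks merge into one
   while the largest anticomplete family is kept, and the bound follows by comparing with
   the block whose product |P_i||P'_i| is smallest.  For F = V(G) the bound forces
   eps^2 |P||P'| >= 1, so one of the families has at least 1/eps members; in its union
   every vertex is adjacent (resp. non-adjacent) only to vertices of its own s-set, so
   the union is eps-restricted. *)

Section LinkedFamilies.
Variable T : finType.
Implicit Types (Q : rel T) (F X Y : {set T}) (P : {set {set T}}).

Definition linked_pair Q X Y : Prop :=
  [disjoint X & Y] /\ {in X & Y, forall x y, Q x y}.

Definition linked_family Q F (s : nat) P : Prop :=
  {in P, forall X, X \subset F /\ #|X| = s} /\
  {in P &, forall X Y, X != Y -> linked_pair Q X Y}.

Lemma exists_subset_card F n : (n <= #|F|)%N -> exists2 X : {set T}, X \subset F & #|X| = n.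
Proof.
case/card_geqP=> xs [xs_uniq <- xsF]; exists [set x in xs].
  by apply/subsetP=> x; rewrite inE => /xsF.
by rewrite cardsE; apply/card_uniqP.
Qed.

Lemma disjoint_card_ltn F X Y :
  X :|: Y \subset F -> [disjoint X & Y] -> (0 < #|Y|)%N -> (#|X| < #|F|)%N.
Proof.
move=> XYF XY Y_gt0; have /eqP cardXY := (leq_card_setU X Y).2; rewrite XY in cardXY.
by have := subset_leq_card XYF; rewrite cardXY; lia.
Qed.

Lemma linked_family1 Q F X : X \subset F -> linked_family Q F #|X| [set X].
Proof. by move=> XF; split=> [Y /set1P-> | Y Z /set1P-> /set1P->]; rewrite ?eqxx. Qed.

Lemma linked_familyS Q F F' s P :
  F \subset F' -> linked_family Q F s P -> linked_family Q F' s P.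
Proof.
move=> FF' [PF PQ]; split=> // X XP; have [XF ->] := PF X XP.
by split=> //; apply: subset_trans XF FF'.
Qed.

Section Gluing.
Variables (Q : rel T) (F : {set T}) (s : nat) (I : finType) (b : I -> {set T}).
Hypotheses (s_gt0 : (0 < s)%N) (bF : forall i, b i \subset F).
Hypothesis b_linked : forall i j, i != j -> linked_pair Q (b i) (b j).

Lemma linked_family_bigcup (P : I -> {set {set T}}) :
  (forall i, linked_family Q (b i) s (P i)) ->
  linked_family Q F s (\bigcup_i P i) /\ #|\bigcup_i P i| = (\sum_i #|P i|)%N.
Proof.
move=> PQ; have memP i X : X \in P i -> X \subset b i /\ #|X| = s := (PQ i).1 X.
split; first split.
- move=> X /bigcupP[i _ /memP[Xb ->]]; split=> //; exact: subset_trans Xb (bF i).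
- move=> X Y /bigcupP[i _ XPi] /bigcupP[j _ YPj] XY.
  have [ij|ij] := eqVneq i j; first by rewrite -ij in YPj; exact: (PQ i).2.
  have [[Xb _] [Yb _]] := (memP i X XPi, memP j Y YPj).
  have [bij Qij] := b_linked ij; split; first exact: disjointWl Xb (disjointWr Yb bij).
  by move=> x y xX yY; apply: Qij; [apply: (subsetP Xb) | apply: (subsetP Yb)].
rewrite -sum1_card partition_disjoint_bigcup => [|i j ij].
  by apply: eq_bigr => i _; rewrite sum1_card.
rewrite -setI_eq0; apply/eqP/setP=> X; rewrite !inE; apply/andP=> -[XPi XPj].
have [[Xbi Xs] [Xbj _]] := (memP i X XPi, memP j X XPj).
have /card_gt0P[x xX] : (0 < #|X|)%N by rewrite Xs.
by have := disjointFr (b_linked ij).1 (subsetP Xbi x xX); rewrite (subsetP Xbj x xX).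
Qed.

Lemma linked_family_glue (Q' : rel T) (i0 : I) (P P' : I -> {set {set T}}) :
  (forall i, linked_family Q (b i) s (P i)) ->
  (forall i, linked_family Q' (b i) s (P' i)) ->
  exists PP PP', [/\ linked_family Q F s PP, linked_family Q' F s PP' &
    (\sum_i #|P i| * #|P' i| <= #|PP| * #|PP'|)%N].
Proof.
move=> PQ P'Q'; have [PPQ cardPP] := linked_family_bigcup PQ.
pose imax := [arg max_(i > i0) #|P' i|].
exists (\bigcup_i P i), (P' imax); split=> //; first exact: linked_familyS (P'Q' imax).
rewrite cardPP big_distrl /=; apply: leq_sum => i _; rewrite leq_mul2l.
by rewrite /imax; case: arg_maxnP => // j _ /(_ i isT) max_j; apply/orP; right.
Qed.

End Gluing.

Lemma card_cover_linked Q F s P : linked_family Q F s P -> #|cover P| = (#|P| * s)%N.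
Proof.
case=> PF PQ; have /eqP <- : trivIset P.
  by apply/trivIsetP=> X Y XP YP XY; exact: (PQ X Y XP YP XY).1.
by rewrite -sum_nat_const; apply: eq_bigr => X /PF[].
Qed.

Lemma leq_card_cover_linked Q F s P :
  linked_family Q F s P -> (0 < #|P|)%N -> (s <= #|cover P|)%N.
Proof. by move=> PQ P_gt0; rewrite (card_cover_linked PQ) leq_pmull. Qed.

Lemma sparse_cover_linked (R : realType) (eps : R) Q Q' F s P :
  (forall x y, Q x y -> ~~ Q' x y) -> linked_family Q F s P ->
  1 <= eps * #|P|%:R -> sparse_on Q' eps (cover P).
Proof.
move=> QQ' PQ Peps v /bigcupP[X XP vX]; rewrite (card_cover_linked PQ).
have [PF PQQ] := PQ; have [_ Xs] := PF X XP.
have nbhX : [set u in cover P | Q' v u] \subset X.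
  apply/subsetP=> u; rewrite inE => /andP[/bigcupP[Y YP uY] Q'vu].
  have [->//|XY] := eqVneq X Y.
  by move: Q'vu; rewrite (negbTE (QQ' _ _ ((PQQ X Y XP YP XY).2 v u vX uY))).
apply: le_trans (_ : #|X|%:R <= _); first by rewrite ler_nat subset_leq_card.
by rewrite Xs natrM mulrA ler_peMl.
Qed.

Lemma complete_blockade_linked (e : rel T) F B :
  blockade_in F B -> complete_blockade e B ->
  forall i j, (i < size B)%N -> (j < size B)%N -> i != j ->
    linked_pair e (nth set0 B i) (nth set0 B j).
Proof. by case=> _ Bdis Bc i j iB jB ij; split; [exact: Bdis | move=> x y; exact: Bc]. Qed.

Lemma anticomplete_blockade_linked (e : rel T) F B :
  blockade_in F B -> anticomplete_blockade e B ->
  forall i j, (i < size B)%N -> (j < size B)%N -> i != j ->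
    linked_pair (compl_rel e) (nth set0 B i) (nth set0 B j).
Proof.
case=> _ Bdis Ba i j iB jB ij; split=> [|x y xi yj]; first exact: Bdis.
rewrite /compl_rel (Ba i j iB jB ij x y xi yj) andbT; apply: contraTneq yj => <-.
by rewrite (disjointFr (Bdis i j iB jB ij) xi).
Qed.

Lemma blockade_block_ltn F B i j :
  blockade_in F B -> (i < size B)%N -> (j < size B)%N -> i != j ->
  (0 < #|nth set0 B j|)%N -> (#|nth set0 B i| < #|F|)%N.
Proof.
case=> BF Bdis iB jB ij; apply: disjoint_card_ltn; last exact: Bdis.
by rewrite subUset !BF.
Qed.

End LinkedFamilies.

Section PowerBounds.
Variable R : realType.
Implicit Types (a c eps th x y : R).

Lemma ler_mul_powR_sum a th c (k N : nat) (M : 'I_k -> nat) :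
  0 <= a -> 0 <= th -> (0 < k)%N -> (\sum_i M i <= N)%N ->
  (forall i, c / k%:R `^ a <= th * (M i)%:R `^ a) -> c <= th * N%:R `^ a.
Proof.
move=> a_ge0 th_ge0 k_gt0 sumMN cM.
pose imin := [arg min_(i < Ordinal k_gt0) M i].
have kMN : (k * M imin <= N)%N.
  have -> : (k * M imin = \sum_(i < k) M imin)%N by rewrite sum_nat_const card_ord.
  apply: leq_trans sumMN; apply: leq_sum => i _.
  by rewrite /imin; case: arg_minnP => // j _; apply.
have := cM imin; rewrite ler_pdivrMr ?powR_gt0 ?ltr0n // => /le_trans; apply.
rewrite -mulrA -powRM ?ler0n // -natrM mulnC; apply: (ler_wpM2l th_ge0).
by apply: (ge0_ler_powR a_ge0); rewrite ?nnegrE ?ler0n ?ler_nat.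
Qed.

Lemma ge1_base_powR a x : 0 < a -> 0 <= x -> 1 <= x `^ a -> 1 <= x.
Proof.
move=> a_gt0 x_ge0 xa_ge1; rewrite leNgt; apply/negP => x_lt1.
have : x `^ a < 1 `^ a by apply: gt0_ltr_powR; rewrite ?nnegrE.
by rewrite powR1 ltNge xa_ge1.
Qed.

Lemma ge1_powR_split eps a c x y : 0 < a -> 0 < c -> 0 <= eps -> 0 <= x -> 0 <= y ->
  c <= eps `^ (2 * a) * c * (x * y) `^ a -> 1 <= eps * x \/ 1 <= eps * y.
Proof.
move=> a_gt0 c_gt0 eps_ge0 x_ge0 y_ge0.
rewrite mulrAC -[leLHS]mul1r ler_pM2r // powRrM powR_mulrn //.
rewrite -powRM ?exprn_ge0 ?mulr_ge0 // expr2 mulrACA.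
have [u_ge0 v_ge0] : 0 <= eps * x /\ 0 <= eps * y by rewrite !mulr_ge0.
move/(ge1_base_powR a_gt0 (mulr_ge0 u_ge0 v_ge0)) => uv_ge1.
by have [|u_lt1] := lerP 1 (eps * x); [left | right; nra].
Qed.

Lemma ler_powR_blockade_width eps a th x (k : nat) :
  0 < eps -> 0 <= a -> (0 < k)%N -> k%:R <= eps^-1 -> 0 <= th -> th <= x ->
  eps `^ a * th <= x / k%:R `^ a.
Proof.
move=> eps_gt0 a_ge0 k_gt0 k_le th_ge0 th_le_x.
rewrite ler_pdivlMr ?powR_gt0 ?ltr0n // mulrAC -(powRM _ (ltW eps_gt0)) ?ler0n //.
apply: le_trans _ th_le_x; apply: ler_piMl th_ge0 _.
have ek : eps * k%:R <= 1 by rewrite -ler_pdivlMl // mulr1.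
have : (eps * k%:R) `^ a <= 1 `^ a.
  by apply: (ge0_ler_powR a_ge0); rewrite ?nnegrE ?mulr_ge0 ?ler0n ?(ltW eps_gt0).
by rewrite powR1.
Qed.

End PowerBounds.

Section BlockadeRecursion.
Variables (R : realType) (T : finType) (e : rel T) (a th : R) (s : nat).
Hypotheses (a_ge0 : 0 <= a) (th_ge0 : 0 <= th) (s_gt0 : (0 < s)%N).

Definition linked_families (F : {set T}) (c : R) (P P' : {set {set T}}) : Prop :=
  [/\ linked_family (compl_rel e) F s P, linked_family e F s P' &
      c <= th * (#|P| * #|P'|)%:R `^ a].

Lemma linked_families_glue k (F : {set T}) (b : 'I_k -> {set T})
    (P P' : 'I_k -> {set {set T}}) :
  (0 < k)%N -> (forall i, b i \subset F) ->
  (forall i j, i != j -> linked_pair e (b i) (b j)) \/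
    (forall i j, i != j -> linked_pair (compl_rel e) (b i) (b j)) ->
  (forall i, linked_families (b i) (#|F|%:R / k%:R `^ a) (P i) (P' i)) ->
  exists PP PP', linked_families F #|F|%:R PP PP'.
Proof.
move=> k_gt0 bF bQ HP.
have Pc i : linked_family (compl_rel e) (b i) s (P i) by case: (HP i).
have P'e i : linked_family e (b i) s (P' i) by case: (HP i).
have bound N : (\sum_i #|P i| * #|P' i| <= N)%N -> #|F|%:R <= th * N%:R `^ a.
  move=> sumN; apply: ler_mul_powR_sum a_ge0 th_ge0 k_gt0 sumN _ => i.
  by case: (HP i).
case: bQ => bQ.
- have [PP [PP' [PPe PP'c sumPP]]] := linked_family_glue s_gt0 bF bQ (Ordinal k_gt0) P'e Pc.
  exists PP', PP; split=> //; apply: bound; rewrite mulnC.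
  by under eq_bigr do rewrite mulnC.
- have [PP [PP' [PPc PP'e sumPP]]] := linked_family_glue s_gt0 bF bQ (Ordinal k_gt0) Pc P'e.
  by exists PP, PP'; split=> //; apply: bound.
Qed.

Hypothesis large_blockade : forall F : {set T}, th <= #|F|%:R ->
  exists k B, [/\ (2 <= k)%N, kw_blockade F B k (#|F|%:R / k%:R `^ a),
    forall i, (i < size B)%N -> (s <= #|nth set0 B i|)%N &
    complete_blockade e B \/ anticomplete_blockade e B].

Lemma linked_families_exist (F : {set T}) :
  (s <= #|F|)%N -> exists P P', linked_families F #|F|%:R P P'.
Proof.
have [n] := ubnP #|F|; elim: n F => // n IHn F Fn sF.
have [Flarge|Fsmall] := leP th #|F|%:R; last first.
  have [X XF Xs] := exists_subset_card sF.
  exists [set X], [set X]; split; try by rewrite -Xs; apply: linked_family1.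
  by rewrite cards1 powR1 mulr1; apply: ltW.
have [k [B [k2 [Bin [kB Bw]] Bs Bhom]]] := large_blockade Flarge.
have iB (i : 'I_k) : (i < size B)%N := leq_trans (ltn_ord i) kB.
pose b (i : 'I_k) := nth set0 B i.
have b_lt i : (#|b i| < n)%N.
  have [j ij] : exists j : 'I_k, i != j.
    have /card_gt1P[x [y [_ _ xy]]] : (1 < #|'I_k|)%N by rewrite card_ord.
    by have [->|] := eqVneq i x; [exists y | exists x].
  apply: leq_trans (blockade_block_ltn Bin (iB i) (iB j) ij _) Fn.
  exact: leq_trans s_gt0 (Bs j (iB j)).
have /fin_all_exists[P /fin_all_exists[P' HP]] :=
  fun i => IHn (b i) (b_lt i) (Bs i (iB i)).
apply: (@linked_families_glue k F b P P' (ltnW k2) (fun i => Bin.1 i (iB i))) => [|i].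
  case: Bhom => [/(complete_blockade_linked Bin)|/(anticomplete_blockade_linked Bin)] bQ;
    [left | right] => i j ij; exact: bQ (iB i) (iB j) ij.
by case: (HP i) => Pc P'e bound; split=> //; apply: le_trans bound; apply: Bw.
Qed.

End BlockadeRecursion.

Lemma restricted_cover_linked (R : realType) (T : finType) (e : rel T) (eps a : R)
    (s : nat) (P P' : {set {set T}}) :
  0 < eps -> 0 < a -> (0 < #|T|)%N ->
  linked_families e a (eps `^ (2 * a) * #|T|%:R) s setT #|T|%:R P P' ->
  exists2 S : {set T}, (s <= #|S|)%N & restricted_on e eps S.
Proof.
move=> eps_gt0 a_gt0 T_gt0 [Pc P'e]; rewrite natrM => T_le.
have PP_gt0 (PP : {set {set T}}) : 1 <= eps * #|PP|%:R -> (0 < #|PP|)%N.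
  by move=> PPeps; rewrite lt0n; apply: contraTneq PPeps => ->; rewrite mulr0 ler10.
have [Peps|P'eps] : 1 <= eps * #|P|%:R \/ 1 <= eps * #|P'|%:R.
  by apply: ge1_powR_split a_gt0 _ _ _ _ T_le; rewrite ?ltr0n ?ler0n ?(ltW eps_gt0).
- exists (cover P); first exact: leq_card_cover_linked Pc (PP_gt0 _ Peps).
  by left; apply: sparse_cover_linked Pc Peps => x y /andP[].
- exists (cover P'); first exact: leq_card_cover_linked P'e (PP_gt0 _ P'eps).
  by right; apply: sparse_cover_linked P'e P'eps => x y exy; rewrite /compl_rel exy andbF.
Qed.

Unset Implicit Arguments. Set Strict Implicit. Set Printing Implicit Defensive.

Theorem theorem7p4 (R : realType) (eps a : R) (T : finType) (e : rel T) :
  symmetric e -> irreflexive e ->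
  0 < eps -> eps < 2^-1 -> 1 <= a ->
  (forall F : {set T}, eps `^ (2 * a) * #|T|%:R <= #|F|%:R ->
     exists k : nat, [/\ (2 <= k)%N, k%:R <= eps^-1 &
       exists B : seq {set T},
         kw_blockade F B k (#|F|%:R / (k%:R `^ a)) /\
         (complete_blockade e B \/ anticomplete_blockade e B)]) ->
  exists S : {set T},
    eps `^ (3 * a) * #|T|%:R <= #|S|%:R /\ restricted_on e eps S.
Proof.
move=> _ _ eps_gt0 eps_lt_half a_ge1 blockades.
have a_gt0 : 0 < a := lt_le_trans ltr01 a_ge1.
have [T0|T_gt0] := posnP #|T|.
  by exists set0; split; [rewrite T0 mulr0 cards0 | left=> v; rewrite inE].
pose th := eps `^ (2 * a) * #|T|%:R; pose m := eps `^ (3 * a) * #|T|%:R.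
have m_th : m = eps `^ a * th.
  rewrite /m /th mulrA -powRD; last by apply/implyP=> _; rewrite gt_eqF.
  by congr (_ `^ _ * _); lra.
have m_le_T : m <= #|T|%:R.
  rewrite /m ler_piMl ?ler0n //; apply: le_trans (ge1r_powR _ _) _; lra.
have [s m_le_s s_min] := ex_minnP (ex_intro (fun n => m <= n%:R) _ m_le_T).
have s_gt0 : (0 < s)%N.
  by rewrite lt0n; apply: contraTneq m_le_s => ->; rewrite -ltNge mulr_gt0 ?powR_gt0 ?ltr0n.
have th_ge0 : 0 <= th by rewrite mulr_ge0 ?powR_ge0.
have [||P [P' PP']] := @linked_families_exist R T e a th s (ltW a_gt0) th_ge0 s_gt0 _ setT.
- move=> F Flarge; have [k [k2 keps [B [Bk Bhom]]]] := blockades F Flarge.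
  exists k, B; split=> // i iB; apply: s_min; rewrite m_th; apply: le_trans (Bk.2.2 i iB).
  exact: ler_powR_blockade_width eps_gt0 (ltW a_gt0) (ltnW k2) keps th_ge0 Flarge.
- by rewrite cardsT; apply: s_min.
rewrite cardsT in PP'; have [S sS Srestr] := restricted_cover_linked eps_gt0 a_gt0 T_gt0 PP'.
by exists S; split=> //; apply: le_trans m_le_s _; rewrite ler_nat.
Qed.
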